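(* Let $k\ge 2$ and let $G$ be the chain graph on $\{o_1,\dots,o_{k-1}\}\cup\{c_1,\dots,c_k\}$ with $E(G)=\bigcup_{m=1}^{k-1}\{\{o_m,c_m\},\{o_m,c_{m+1}\}\}$. Let $1\le i<j\le k$, so that the client proximity is $d(c_i,c_j)=j-i$. Starting from $G$, apply successively, for $m=i,i+1,\dots,j-1$, the $\sigma_x$-measurement rule at $o_m$ with support vertex $b_0=c_{m+1}$, i.e. replace the current graph $H$ by $\tau_{c_{m+1}}\big(\tau_{o_m}(\tau_{c_{m+1}}(H))-o_m\big)$. Then these $d(c_i,c_j)$ operations are well defined (at each step $c_{m+1}$ is a neighbour of $o_m$ in the current graph) and in the resulting graph the vertices $c_i$ and $c_j$ are adjacent. Equivalently, $d(c_i,c_j)$ single-qubit $\sigma_x$-measurements on orchestrator qubits of the chain graph state create, up to local unitaries, a graph state in which $c_i$ and $c_j$ are joined by an edge.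
   Context: All graphs are finite, simple and undirected. For a graph $H=(V,E)$ and $a\in V$, $N_a=\{b:\{a,b\}\in E\}$; $\tau_a(H)$ (local complementation) toggles the edge $\{b,c\}$ for every pair of distinct $b,c\in N_a$ and leaves the other edges unchanged; $H-a$ deletes $a$ and its incident edges. Graph state: $\ket{H}=\prod_{\{a,b\}\in E}\mathrm{CZ}_{ab}\ket{+}^{\otimes|V|}$. Measurement rules (up to local unitaries): $\sigma_z$ at $a$ gives $H-a$; $\sigma_y$ at $a$ gives $\tau_a(H)-a$; $\sigma_x$ at $a$ with chosen $b_0\in N_a$ gives $\tau_{b_0}(\tau_a(\tau_{b_0}(H))-a)$. A client vertex (one of the $c$'s) is a bridge if it is adjacent to more than one orchestrator vertex (one of the $o$'s). The proximity $d(c,c')$ of two distinct clients is $1$ plus the number of bridges lying strictly between $c$ and $c'$ on a shortest $c$–$c'$ path in $G$; for the chain graph, $d(c_i,c_j)=|j-i|$. *)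

From mathcomp Require Import all_ssreflect.
Set Implicit Arguments. Unset Strict Implicit. Unset Printing Implicit Defensive.

Section Graphs.
Variable T : finType.

(* a graph: (vertex set, edge set); edges are sets [set a; b] with a != b *)
Definition graph := ({set T} * {set {set T}})%type.

Definition nbhd (H : graph) (a : T) : {set T} :=
  [set b | (b != a) && ([set a; b] \in H.2)].

Definition lc (H : graph) (a : T) : graph :=
  (H.1, [set e : {set T} | (e \in H.2) (+)
     [exists b, exists c, [&& b \in nbhd H a, c \in nbhd H a, b != c
                          & e == [set b; c]]]]).

Definition delv (H : graph) (a : T) : graph :=
  (H.1 :\ a, [set e in H.2 | a \notin e]).

Definition xmeas (H : graph) (a b0 : T) : graph :=
  lc (delv (lc (lc H b0) a) a) b0.

End Graphs.

(* Chain graph with parameter k.  Ambient type bool * 'I_k.+1: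
   orchestrator o_m = (false, m) (1 <= m <= k-1), client c_m = (true, m)
   (1 <= m <= k); indices are 1-based as in the paper. *)
Definition cvert (k : nat) := (bool * 'I_k.+1)%type.
Definition orch (k m : nat) : cvert k := (false, inord m).
Definition client (k m : nat) : cvert k := (true, inord m).

Definition chain_graph (k : nat) : graph (cvert k) :=
  ([set v : cvert k | (1 <= v.2) && (if v.1 then v.2 <= k else v.2 <= k.-1)],
   [set e : {set cvert k} | [exists m : 'I_k.+1, (1 <= m <= k.-1) &&
      ((e == [set orch k m; client k m]) || (e == [set orch k m; client k m.+1]))]]).

Definition after_meas (k i m : nat) : graph (cvert k) :=
  foldl (fun H l => xmeas H (orch k l) (client k l.+1))
        (chain_graph k) (iota i (m - i)).

From mathcomp Require Import all_ssreflect zify.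
Set Implicit Arguments. Unset Strict Implicit. Unset Printing Implicit Defensive.

(* After the measurements at o_i, ..., o_(m-1) the graph is the chain with
   o_i, ..., o_(m-1) deleted, o_m joined to c_i instead of c_m, and c_i
   joined to c_(i+1), ..., c_m.  A further sigma_x measurement at o_m with
   support c_(m+1) reproduces this shape with m + 1 in place of m; so c_(m+1)
   is always a neighbour of o_m, and for m = j the edge {c_i, c_j} is present.
   Graphs are handled through their adjacency relations, on which local
   complementation and vertex deletion act by explicit boolean formulas. *)

Section AdjacencyRelations.
Variable T : finType.

Definition edges_of (P : rel T) : {set {set T}} :=
  [set e | [exists x, exists y, [&& x != y, P x y & e == [set x; y]]]].

Definition is_pair (e : {set T}) : bool :=
  [exists x, exists y, (x != y) && (e == [set x; y])].

Lemma is_pairP e : reflect (exists x y, x != y /\ e = [set x; y]) (is_pair e).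
Proof.
apply: (iffP existsP) => [[x /existsP [y /andP [nxy /eqP ->]]]|[x [y [nxy ->]]]].
  by exists x, y.
by exists x; apply/existsP; exists y; rewrite nxy eqxx.
Qed.

Lemma eq_set2 (x y u v : T) : x != y -> [set x; y] = [set u; v] ->
  u = x /\ v = y \/ u = y /\ v = x.
Proof.
move=> nxy E.
have /set2P hu : u \in [set x; y] by rewrite E set21.
have /set2P hv : v \in [set x; y] by rewrite E set22.
have /set2P hx : x \in [set u; v] by rewrite -E set21.
have /set2P hy : y \in [set u; v] by rewrite -E set22.
have xy : x = y -> False by move/eqP; rewrite (negPf nxy).
case: hu hv hx hy => -> [] ->; [| by left | by right |].
- by move=> _ [] /esym /xy.
- by move=> [] /xy.
Qed.

Lemma set2_eqE (x y u v : T) : x != y ->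
  ([set x; y] == [set u; v]) = (x == u) && (y == v) || (x == v) && (y == u).
Proof.
move=> nxy; apply/eqP/orP => [/(eq_set2 nxy) [[-> ->]|[-> ->]]|]; rewrite ?eqxx; auto.
by case=> /andP [/eqP -> /eqP ->]; rewrite // setUC.
Qed.

Lemma mem_edges_of (P : rel T) x y : symmetric P ->
  ([set x; y] \in edges_of P) = (x != y) && P x y.
Proof.
move=> symP; rewrite inE; apply/existsP/andP => [[u /existsP [v]]|[nxy Pxy]].
  case/and3P=> nuv Puv /eqP /esym /(eq_set2 nuv) [[-> ->]|[-> ->]] //.
  by rewrite eq_sym symP.
by exists x; apply/existsP; exists y; rewrite nxy Pxy eqxx.
Qed.

Lemma edges_of_pair (P : rel T) e : e \in edges_of P -> is_pair e.
Proof.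
rewrite inE => /existsP [x /existsP [y /and3P [nxy _ /eqP ->]]].
by apply/is_pairP; exists x, y.
Qed.

Lemma edges_ofE (S : {set {set T}}) (P : rel T) : symmetric P ->
  (forall e, e \in S -> is_pair e) ->
  (forall x y, x != y -> ([set x; y] \in S) = P x y) -> S = edges_of P.
Proof.
move=> symP pairS SP; apply/setP=> e.
case: (boolP (is_pair e)) => [/is_pairP [x [y [nxy ->]]]|npair].
  by rewrite mem_edges_of // nxy SP.
by rewrite (contraNF (pairS e) npair) (contraNF (@edges_of_pair P e) npair).
Qed.

Lemma eq_edges_of (P Q : rel T) : symmetric P -> symmetric Q ->
  (forall x y, x != y -> P x y = Q x y) -> edges_of P = edges_of Q.
Proof.
move=> symP symQ PQ; apply: edges_ofE => // [e|x y nxy].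
  exact: edges_of_pair.
by rewrite mem_edges_of // nxy PQ.
Qed.

Definition nbr (P : rel T) a b := (b != a) && P a b.

Definition lc_rel (P : rel T) a : rel T :=
  fun x y => P x y (+) (nbr P a x && nbr P a y).

Definition del_rel (P : rel T) a : rel T :=
  fun x y => [&& P x y, x != a & y != a].

Definition xmeas_rel (P : rel T) a b0 : rel T :=
  lc_rel (del_rel (lc_rel (lc_rel P b0) a) a) b0.

Lemma lc_rel_sym P a : symmetric P -> symmetric (lc_rel P a).
Proof. by move=> symP x y; rewrite /lc_rel /= symP andbC. Qed.

Lemma del_rel_sym P a : symmetric P -> symmetric (del_rel P a).
Proof. by move=> symP x y; rewrite /del_rel /= symP (andbC (x != a)). Qed.

Lemma xmeas_rel_sym P a b0 : symmetric P -> symmetric (xmeas_rel P a b0).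
Proof.
by move=> symP; apply: lc_rel_sym; apply: del_rel_sym; do 2 apply: lc_rel_sym.
Qed.

Section OnEdges.
Variables (H : graph T) (P : rel T).
Hypotheses (symP : symmetric P) (HP : H.2 = edges_of P).

Lemma nbhd_edges_of a : nbhd H a = [set b | nbr P a b].
Proof.
apply/setP=> b; rewrite !inE HP mem_edges_of // /nbr.
by case: eqP => [->|/eqP nba]; rewrite ?eqxx // eq_sym nba.
Qed.

Lemma lc_edges_of a : (lc H a).2 = edges_of (lc_rel P a).
Proof.
apply: edges_ofE => [|e|x y nxy]; first exact: lc_rel_sym.
  rewrite inE HP; case: (boolP (e \in _)) => [/edges_of_pair //|_] /=.
  by case/existsP=> b /existsP [c /and4P [_ _ nbc /eqP ->]]; apply/is_pairP; exists b, c.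
rewrite inE HP mem_edges_of // nxy nbhd_edges_of /lc_rel; congr (_ (+) _).
apply/existsP/andP => [[b /existsP [c]]|[nx ny]].
  rewrite !inE => /and4P [nb nc nbc /eqP /esym /(eq_set2 nbc)].
  by case=> [[-> ->]|[-> ->]].
by exists x; apply/existsP; exists y; rewrite !inE nx ny nxy eqxx.
Qed.

Lemma delv_edges_of a : (delv H a).2 = edges_of (del_rel P a).
Proof.
apply: edges_ofE => [|e|x y nxy]; first exact: del_rel_sym.
  by rewrite inE HP => /andP [/edges_of_pair].
by rewrite inE HP mem_edges_of // nxy /del_rel !inE negb_or !(eq_sym a).
Qed.

End OnEdges.

Lemma xmeas_edges_of (H : graph T) P a b0 : symmetric P -> H.2 = edges_of P ->
  (xmeas H a b0).2 = edges_of (xmeas_rel P a b0).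
Proof.
move=> symP HP; have symP1 := lc_rel_sym b0 symP.
have symP2 := lc_rel_sym a symP1; have symP3 := del_rel_sym a symP2.
by apply: lc_edges_of => //; apply: delv_edges_of => //;
  apply: lc_edges_of => //; apply: lc_edges_of.
Qed.

End AdjacencyRelations.

Definition orch_client_adj (k i m : nat) (o c : 'I_k.+1) : bool :=
  (1 <= o <= k.-1) &&
  [|| (c == o :> nat) && ((o < i) || (m < o)),
      (c == o.+1 :> nat) && ((o < i) || (m <= o)) |
      (c == i :> nat) && (o == m :> nat)].

Definition client_client_adj (k i m : nat) (c c' : 'I_k.+1) : bool :=
  (c == i :> nat) && (i < c' <= m).

Definition meas_adj (k i m : nat) : rel (cvert k) := fun x y =>
  match x, y with
  | (false, o), (true, c) | (true, c), (false, o) => orch_client_adj i m o c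
  | (true, c), (true, c') => client_client_adj i m c c' || client_client_adj i m c' c
  | (false, _), (false, _) => false
  end.
Arguments meas_adj : clear implicits.

Lemma meas_adj_sym k i m : symmetric (meas_adj k i m).
Proof. by move=> [[] x] [[] y] //=; rewrite orbC. Qed.

Lemma eq_inord k (o : 'I_k.+1) n : n <= k -> (o == inord n) = (o == n :> nat).
Proof. by move=> h; rewrite -val_eqE /= inordK. Qed.

Ltac vertex_arith :=
  rewrite /nbr /meas_adj /orch /client /= /orch_client_adj /client_client_adj
    ?xpair_eqE /= ?eq_inord ?inordK //; lia.

Section MeasurementStep.
Variables k i m : nat.
Hypotheses (i_gt0 : 1 <= i) (i_le_m : i <= m) (m_lt_k : m < k).
Let P := meas_adj k i m.
Let o := orch k m.
Let o' := orch k m.+1.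
Let b0 := client k m.+1.
Let ci := client k i.

Lemma support_nbrE x : nbr P b0 x = (x == o) || (x == o') && (m.+1 <= k.-1).
Proof. by case: x => [[] x]; have := ltn_ord x; vertex_arith. Qed.

Lemma orch_nbr_lcE x :
  nbr (lc_rel P b0) o x = [|| x == ci, x == b0 | (x == o') && (m.+1 <= k.-1)].
Proof.
rewrite /nbr /lc_rel -/(nbr P b0 x) !support_nbrE.
by case: x => [[] x]; have := ltn_ord x; vertex_arith.
Qed.

Lemma support_nbr_delE x : nbr (del_rel (lc_rel (lc_rel P b0) o) o) b0 x = (x == ci).
Proof.
rewrite /nbr /del_rel /lc_rel -/(nbr P b0 x) -/(nbr (lc_rel P b0) o x).
rewrite !orch_nbr_lcE !support_nbrE.
by case: x => [[] x]; have := ltn_ord x; vertex_arith.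
Qed.

(* Just before the last local complementation c_(m+1) has the single
   neighbour c_i, so that complementation toggles no edge. *)
Lemma xmeas_rel_meas_adj x y : x != y -> xmeas_rel P o b0 x y = meas_adj k i m.+1 x y.
Proof.
move=> nxy; rewrite /xmeas_rel {1}/lc_rel !support_nbr_delE.
have -> : (x == ci) && (y == ci) = false.
  by apply: contraNF nxy => /andP [/eqP -> /eqP ->].
rewrite addbF /del_rel /lc_rel -!/(nbr P b0 _) -!/(nbr (lc_rel P b0) o _).
rewrite !orch_nbr_lcE !support_nbrE.
move: nxy; case: x => [[] x]; case: y => [[] y]; rewrite xpair_eqE -?val_eqE /= => nxy.
all: have := ltn_ord x; have := ltn_ord y; rewrite /ci /b0 /o /o'; vertex_arith.
Qed.
End MeasurementStep.

Lemma chain_edges k i : (chain_graph k).2 = edges_of (meas_adj k i i).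
Proof.
apply: edges_ofE => [|e|x y nxy]; first exact: meas_adj_sym.
  rewrite inE => /existsP [m /andP [_ /orP [] /eqP ->]]; apply/is_pairP.
    by exists (orch k m), (client k m).
  by exists (orch k m), (client k m.+1).
rewrite inE; apply/existsP/idP => [[m /andP [m_range]]|adj].
  by case/orP=> /eqP /(eq_set2 nxy) [[<- <-]|[<- <-]]; have := ltn_ord m; vertex_arith.
move: adj nxy; case: x => [[] x]; case: y => [[] y] //=.
- by rewrite /client_client_adj; lia.
- rewrite /orch_client_adj => adj _; exists y.
  have := ltn_ord x; rewrite !set2_eqE //; vertex_arith.
- rewrite /orch_client_adj => adj _; exists x.
  have := ltn_ord y; rewrite !set2_eqE //; vertex_arith.
Qed.

Lemma after_measS k i m : i <= m ->
  after_meas k i m.+1 = xmeas (after_meas k i m) (orch k m) (client k m.+1).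
Proof.
by move=> i_le_m; rewrite /after_meas subSn // -[(m - i).+1]addn1 iotaD foldl_cat subnKC.
Qed.

Lemma after_meas_edges k i m : 1 <= i -> i <= m -> m <= k ->
  (after_meas k i m).2 = edges_of (meas_adj k i m).
Proof.
move=> i_gt0; elim: m => [|m IHm]; first by case: i i_gt0.
rewrite leq_eqVlt ltnS => /predU1P [<- _|i_le_m m_lt_k].
  by rewrite /after_meas subnn; apply: chain_edges.
rewrite after_measS // (xmeas_edges_of _ _ (meas_adj_sym i m) (IHm i_le_m (ltnW m_lt_k))).
apply: eq_edges_of; [exact/xmeas_rel_sym/meas_adj_sym|exact: meas_adj_sym|].
exact: xmeas_rel_meas_adj.
Qed.

Theorem lemma3 (k i j : nat) :
  2 <= k -> 1 <= i -> i < j -> j <= k ->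
  (forall m, i <= m < j ->
     client k m.+1 \in nbhd (after_meas k i m) (orch k m))
  /\ [set client k i; client k j] \in (after_meas k i j).2.
Proof.
move=> _ i_gt0 i_lt_j j_le_k; split.
  move=> m /andP [i_le_m m_lt_j]; have m_lt_k := leq_trans m_lt_j j_le_k.
  rewrite (nbhd_edges_of (meas_adj_sym i m)) ?after_meas_edges ?(ltnW m_lt_k) //.
  by rewrite inE; vertex_arith.
rewrite after_meas_edges ?(ltnW i_lt_j) // mem_edges_of; last exact: meas_adj_sym.
vertex_arith.
Qed.
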